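(* Let $X$ be a nonempty compact metric space. Any two complete tree systems of peripheral extensions of $X$ are isomorphic.
   Context: A peripheral extension of $X$ is a compact metric space $\ddot X$ containing a countably infinite discrete open dense subset $P$ (the peripheral points) with $\ddot X\setminus P$ homeomorphic to $X$. Let $T$ be the countable tree in which every vertex has infinite valence, $V_T$ its vertex set, and $N_t$ the set of oriented edges of $T$ with initial vertex $t$. A complete tree system of peripheral extensions of $X$ is a tuple $\Theta=(\{X_t\},\{b_t\})$ where for each $t\in V_T$, $X_t$ is a space homeomorphic to $X$ equipped with a peripheral extension $\ddot X_t$ with peripheral set $P_t$, and $b_t:N_t\to P_t$ is a bijection. An isomorphism $\Theta\to\Theta'=(\{X'_t\},\{b'_t\})$ is a tuple $(\lambda,\{f_t\})$ where $\lambda:T\to T$ is a tree automorphism, each $f_t:\ddot X_t\to\ddot X'_{\lambda(t)}$ is a homeomorphism mapping $X_t$ onto $X'_{\lambda(t)}$, and $b'_{\lambda(t)}(\lambda(e))=f_t(b_t(e))$ for all $t\in V_T$, $e\in N_t$. *)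

From HB Require Import structures.
From mathcomp Require Import all_boot all_order all_algebra.
From mathcomp Require Import all_classical all_reals all_analysis.

Set Implicit Arguments.
Unset Strict Implicit.
Unset Printing Implicit Defensive.

Import numFieldNormedType.Exports.
Local Open Scope classical_set_scope.

Definition homeomorphism (A B : topologicalType) (f : A -> B) : Prop :=
  exists g : B -> A, cancel f g /\ cancel g f /\ continuous f /\ continuous g.

(** [g : X -> Y] is a homeomorphism of [X] onto the subspace [S] of [Y]
    (subspace topology written out: open sets of [S] are [V `&` S], [V] open). *)
Definition homeo_onto (X Y : topologicalType) (g : X -> Y) (S : set Y) : Prop :=
  injective g /\ range g = S /\ continuous g /\
  (forall U : set X, open U -> exists V : set Y, open V /\ g @` U = V `&` S).

Definition peripheral_extension (R : realType) (X Y : pseudoMetricType R)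
    (P : set Y) (e : X -> Y) : Prop :=
  [/\ hausdorff_space Y /\ compact [set: Y],
      countable P /\ infinite_set P,
      (forall p, P p -> exists U : set Y, open U /\ U `&` P = [set p]),
      open P /\ closure P = [set: Y]
    & homeo_onto e (~` P)].

Fixpoint is_walk (V : Type) (adj : V -> V -> Prop) (x : V) (s : seq V) : Prop :=
  match s with
  | [::] => True
  | y :: s' => adj x y /\ is_walk adj y s'
  end.

Definition reduced_walk (V : Type) (x : V) (s : seq V) : Prop :=
  forall i, (i + 2 <= size s)%N -> nth x (x :: s) i <> nth x (x :: s) (i + 2).

Definition is_tree (V : Type) (adj : V -> V -> Prop) : Prop :=
  [/\ (forall x y, adj x y -> adj y x),
      (forall x, ~ adj x x),
      (forall x y, exists s, is_walk adj x s /\ last x s = y)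
    & (forall x s, is_walk adj x s -> (0 < size s)%N -> last x s = x ->
         ~ reduced_walk x s)].

Definition countable_tree_infinite_valence (V : Type) (adj : V -> V -> Prop)
  : Prop :=
  [/\ is_tree adj, inhabited V, countable [set: V]
    & forall t, infinite_set [set s | adj t s]].

(** For each vertex [t], [Xdd t] is the peripheral extension
    with peripheral set [Per t]; the space [X_t] is [Xdd t \ Per t],
    homeomorphic to [X] via [emb t].  The oriented edge [(t, s)] (with
    [adj t s]) is sent to [bmap t s], and [s |-> bmap t s] is a bijection
    from the neighbours of [t] (= oriented edges with initial vertex [t])
    onto [Per t]. *)
Unset Implicit Arguments.
Record tree_system (R : realType) (X : pseudoMetricType R) (V : Type)
    (adj : V -> V -> Prop) := TreeSystem {
  Xdd : V -> pseudoMetricType R;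
  Per : forall t, set (Xdd t);
  emb : forall t, X -> Xdd t;
  bmap : forall t, V -> Xdd t;
  ts_periph : forall t : V, peripheral_extension (Per t) (emb t);
  ts_bmap_in : forall t s, adj t s -> Per t (bmap t s);
  ts_bmap_inj : forall t s s', adj t s -> adj t s' ->
                  bmap t s = bmap t s' -> s = s';
  ts_bmap_surj : forall t p, Per t p -> exists2 s, adj t s & bmap t s = p
}.
Set Implicit Arguments.
Arguments tree_system {R} X {V} adj.
Arguments Xdd {R X V adj}.
Arguments Per {R X V adj}.
Arguments emb {R X V adj}.
Arguments bmap {R X V adj}.

Definition ts_isomorphic (R : realType) (X : pseudoMetricType R) (V : Type)
    (adj : V -> V -> Prop) (Th Th' : tree_system X adj) : Prop :=
  exists lam : V -> V,
    bijective lam /\ (forall x y, adj x y <-> adj (lam x) (lam y)) /\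
    exists f : forall t, Xdd Th t -> Xdd Th' (lam t),
      forall t,
        [/\ homeomorphism (f t),
            f t @` (~` Per Th t) = ~` Per Th' (lam t)
          & forall s, adj t s -> bmap Th' (lam t) (lam s) = f t (bmap Th t s)].

(* Any two peripheral extensions of X are homeomorphic through a map that
   sends the copy of X onto the copy of X and a prescribed peripheral point to
   a prescribed peripheral point.  On the copies of X the map is the
   identification through X.  The peripheral points, countable and dense, are
   matched by a back-and-forth construction in which a peripheral point close
   to a point k of the copy of X is only sent close to the image of k; since
   the peripheral points are isolated and the spaces compact, at every scale
   this holds for all but finitely many of them, which gives continuity.

   The isomorphism of tree systems is then built outwards from a root: once
   f_t is fixed, the edge labels dictate lam on the neighbours of t, and at a
   neighbour s one takes a homeomorphism sending the label of the edge back to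
   t to the label of its image.  Uniqueness of reduced walks in a tree makes
   lam well defined, injective and onto. *)

From HB Require Import structures.
From mathcomp Require Import all_boot all_order all_algebra.
From mathcomp Require Import all_classical all_reals all_analysis.
From mathcomp Require Import zify.
Set Implicit Arguments.
Unset Strict Implicit.
Unset Printing Implicit Defensive.
Import Order.TTheory GRing.Theory Num.Theory.
Import numFieldNormedType.Exports.
Local Open Scope classical_set_scope.
Local Open Scope ring_scope.

Lemma countable_range (T : choiceType) (A : set T) (a : T) :
  countable A -> A a -> exists e : nat -> T, range e = A.
Proof.
move=> /countable_injP [c cinj] Aa.
pose e n := xget a (fun x => A x /\ c x = n).
exists e; apply/seteqP; split => [_ [n _ <-]|x Ax].
  rewrite /e; case: xgetP => [y _ []//|_]; exact: Aa.
exists (c x) => //; rewrite /e; case: xgetP => [y _ [Ay cy]|/(_ x) []//].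
by apply: cinj; rewrite ?inE.
Qed.

Lemma uniq_fst_functional (A B : eqType) (M : seq (A * B)) a b b' :
  uniq (map fst M) -> (a, b) \in M -> (a, b') \in M -> b = b'.
Proof.
elim: M => //= -[x y] M IH /andP [xM uM]; rewrite !in_cons.
case/orP => [/eqP [e1 e2]|abM]; case/orP => [/eqP [e3 e4]|ab'M]; subst => //.
- by move: xM; rewrite (map_f fst ab'M).
- by move: xM; rewrite (map_f fst abM).
- exact: IH.
Qed.

Lemma uniq_snd_functional (A B : eqType) (M : seq (A * B)) a a' b :
  uniq (map snd M) -> (a, b) \in M -> (a', b) \in M -> a = a'.
Proof.
pose swap (ab : A * B) := (ab.2, ab.1).
have -> : map snd M = map fst (map swap M) by rewrite -map_comp.
by move=> uM abM a'bM; apply: (uniq_fst_functional uM); apply/mapP;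
  [exists (a, b)|exists (a', b)].
Qed.

Section BackAndForth.
Variables (Y Y' : choiceType) (P : set Y) (P' : set Y').
Variables (p0 : Y) (q0 : Y') (Fw : Y -> Y' -> Prop) (Bw : Y' -> Y -> Prop).
Hypothesis Pp0 : P p0.
Hypothesis P'q0 : P' q0.
Hypothesis Fw_avoid : forall p, P p -> forall E : seq Y',
  exists q, [/\ P' q, q \notin E & Fw p q].
Hypothesis Bw_avoid : forall q, P' q -> forall E : seq Y,
  exists p, [/\ P p, p \notin E & Bw q p].

Definition admissible (pq : Y * Y') := [/\ P pq.1, P' pq.2 &
  pq = (p0, q0) \/ Fw pq.1 pq.2 \/ Bw pq.2 pq.1].

Definition matching (M : seq (Y * Y')) :=
  [/\ uniq (map fst M), uniq (map snd M) & {in M, forall pq, admissible pq}].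

Definition extend_fw (p : Y) (M : seq (Y * Y')) :=
  if p \in map fst M then M
  else (p, xget q0 (fun q => [/\ P' q, q \notin map snd M & Fw p q])) :: M.

Definition extend_bw (q : Y') (M : seq (Y * Y')) :=
  if q \in map snd M then M
  else (xget p0 (fun p => [/\ P p, p \notin map fst M & Bw q p]), q) :: M.

Lemma extend_fw_sub p M : {subset M <= extend_fw p M}.
Proof. by rewrite /extend_fw; case: ifP => _ pq //; rewrite in_cons orbC => ->. Qed.

Lemma extend_bw_sub q M : {subset M <= extend_bw q M}.
Proof. by rewrite /extend_bw; case: ifP => _ pq //; rewrite in_cons orbC => ->. Qed.

Lemma extend_fw_dom p M : p \in map fst (extend_fw p M).
Proof. by rewrite /extend_fw; case: ifP => // _; rewrite inE eqxx. Qed.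

Lemma extend_bw_rng q M : q \in map snd (extend_bw q M).
Proof. by rewrite /extend_bw; case: ifP => // _; rewrite inE eqxx. Qed.

Lemma matching_extend_fw p M : P p -> matching M -> matching (extend_fw p M).
Proof.
rewrite /extend_fw => Pp [u1 u2 adm]; case: ifPn => // pM.
set q := xget _ _; have [Pq qM Fpq] : [/\ P' q, q \notin map snd M & Fw p q].
  have [q' q'P] := Fw_avoid Pp (map snd M).
  exact: (xgetPex q0 (P := fun q => [/\ P' q, _ & _]) (ex_intro _ q' q'P)).
split; rewrite /= ?pM ?qM // => pq; rewrite in_cons => /orP [/eqP ->|]; last exact: adm.
by split => //; right; left.
Qed.

Lemma matching_extend_bw q M : P' q -> matching M -> matching (extend_bw q M).
Proof.
rewrite /extend_bw => P'q [u1 u2 adm]; case: ifPn => // qM.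
set p := xget _ _; have [Pp pM Bqp] : [/\ P p, p \notin map fst M & Bw q p].
  have [p' p'P] := Bw_avoid P'q (map fst M).
  exact: (xgetPex p0 (P := fun p => [/\ P p, _ & _]) (ex_intro _ p' p'P)).
split; rewrite /= ?pM ?qM // => pq; rewrite in_cons => /orP [/eqP ->|]; last exact: adm.
by split => //; right; right.
Qed.

Section Stages.
Variables (e : nat -> Y) (e' : nat -> Y').
Hypothesis e_onto : range e = P.
Hypothesis e'_onto : range e' = P'.

Fixpoint stage n : seq (Y * Y') :=
  if n is m.+1 then extend_bw (e' m) (extend_fw (e m) (stage m)) else [:: (p0, q0)].

Lemma matching_stage n : matching (stage n).
Proof.
elim: n => [|n IH] /=.
  by split => // pq; rewrite inE => /eqP ->; split => //; left.
apply: matching_extend_bw; first by rewrite -e'_onto.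
by apply: matching_extend_fw; first by rewrite -e_onto.
Qed.

Lemma stage_mono m n : (m <= n)%N -> {subset stage m <= stage n}.
Proof.
move=> /subnK <-; elim: (n - m)%N => // k IH pq /IH pqk.
by rewrite addSn /=; apply/extend_bw_sub/extend_fw_sub.
Qed.

Definition matched p q := exists n, (p, q) \in stage n.

Lemma matched_functional p q q' : matched p q -> matched p q' -> q = q'.
Proof.
move=> [m pqm] [n pq'n]; have [u _ _] := matching_stage (maxn m n).
exact: uniq_fst_functional u (stage_mono (leq_maxl m n) pqm)
  (stage_mono (leq_maxr m n) pq'n).
Qed.

Lemma matched_injective p p' q : matched p q -> matched p' q -> p = p'.
Proof.
move=> [m pqm] [n pq'n]; have [_ u _] := matching_stage (maxn m n).
exact: uniq_snd_functional u (stage_mono (leq_maxl m n) pqm)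
  (stage_mono (leq_maxr m n) pq'n).
Qed.

Lemma matched_admissible p q : matched p q -> admissible (p, q).
Proof. by move=> [n pqn]; have [_ _] := matching_stage n; apply. Qed.

Lemma matched_total p : P p -> exists q, matched p q.
Proof.
rewrite -e_onto => -[n _ <-].
have /mapP [[p' q] pqM /= ->] := extend_fw_dom (e n) (stage n).
by exists q, n.+1; apply: extend_bw_sub.
Qed.

Lemma matched_onto q : P' q -> exists p, matched p q.
Proof.
rewrite -e'_onto => -[n _ <-].
have /mapP [[p q'] pqM /= ->] := extend_bw_rng (e' n) (extend_fw (e n) (stage n)).
by exists p, n.+1.
Qed.

End Stages.

Lemma back_and_forth : countable P -> countable P' ->
  exists (s : Y -> Y') (t : Y' -> Y),
    [/\ forall p, P p -> P' (s p) /\ t (s p) = p,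
        forall q, P' q -> P (t q) /\ s (t q) = q,
        s p0 = q0
      & forall p, P p -> p <> p0 -> Fw p (s p) \/ Bw (s p) p].
Proof.
move=> cP cP'.
have [e e_onto] := countable_range cP Pp0.
have [e' e'_onto] := countable_range cP' P'q0.
pose R := matched e e'.
pose s p := xget q0 (R p); pose t q := xget p0 (R ^~ q).
have Rs p : P p -> R p (s p).
  by move=> /(matched_total e' e_onto) [q Rpq]; exact: xgetPex (ex_intro (R p) q Rpq).
have Rt q : P' q -> R (t q) q.
  by move=> /(matched_onto e e'_onto) [p Rpq]; exact: xgetPex (ex_intro (R ^~ q) p Rpq).
have R_fun := matched_functional e_onto e'_onto.
have R_inj := matched_injective e_onto e'_onto.
exists s, t; split.
- move=> p /Rs Rp; have [_ P's _] := matched_admissible e_onto e'_onto Rp.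
  by split => //; apply: R_inj (Rt _ P's) Rp.
- move=> q /Rt Rq; have [Pt _ _] := matched_admissible e_onto e'_onto Rq.
  by split => //; apply: R_fun (Rs _ Pt) Rq.
- by apply: R_fun (Rs _ Pp0) _; exists 0%N; rewrite inE.
- move=> p /Rs /(matched_admissible e_onto e'_onto) [_ _ [[]|//]].
  by move=> -> _ /(_ erefl).
Qed.

End BackAndForth.

Lemma near_mem_seq (T : topologicalType) (x : T) (E : seq T) :
  accessible_space T -> \forall y \near x, y \in E -> y = x.
Proof.
move=> acc; elim: E => [|a E IH]; first exact: nearW.
have [<-|ax] := eqVneq x a.
  by apply: filterS IH => y yE; rewrite in_cons => /orP [/eqP//|/yE].
have xNa : nbhs x (~` [set a]).
  apply: open_nbhs_nbhs; split; first by rewrite openC; exact: accessible_closed_set1.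
  by move=> /= xa; move: ax; rewrite xa eqxx.
apply: filterS (filterI xNa IH) => y [ya yE].
by rewrite in_cons => /orP [/eqP //|/yE].
Qed.

Lemma dense_avoid_seq (R : realType) (Y : pseudoMetricType R) (P : set Y)
    (x : Y) (r : R) (E : seq Y) :
  accessible_space Y -> closure P = [set: Y] -> ~ P x -> 0 < r ->
  exists q, [/\ P q, q \notin E & ball x r q].
Proof.
move=> acc dP nPx r0.
have : closure P x by rewrite dP.
move=> /(_ _ (filterI (nbhsx_ballx x r r0) (near_mem_seq x E acc))) [q [Pq [xq qE]]].
exists q; split => //; apply/negP => /qE qx; apply: nPx; by rewrite -qx.
Qed.

Definition discrete_set (T : topologicalType) (P : set T) :=
  forall p, P p -> exists U, open U /\ U `&` P = [set p].

Definition pointed_at (T : Type) (y : T) : Type := T.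
HB.instance Definition _ (T : topologicalType) (y : T) :=
  Topological.copy (pointed_at y) T.
HB.instance Definition _ (T : topologicalType) (y : T) :=
  isPointed.Build (pointed_at y) y.

(* [compact_cover] is only available for pointed spaces. *)
Lemma compact_cover_at (T : topologicalType) (y : T) (A : set T) :
  compact A -> @cover_compact (pointed_at y) A.
Proof. by rewrite -compact_cover. Qed.

Lemma discrete_far_finite (R : realType) (Y : pseudoMetricType R) (P : set Y)
    (r : R) :
  compact [set: Y] -> discrete_set P -> 0 < r ->
  exists E : seq Y, forall p, P p -> (forall k, ~ P k -> ~ ball k r p) -> p \in E.
Proof.
move=> cY iso r0; have [[y0 _]|/set0P/negP/negPn/eqP P0] := pselect (P !=set0); last first.
  by exists [::] => p; rewrite P0.
pose O := \bigcup_(k in ~` P) (ball k r)°.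
have cO : compact (~` O).
  apply: (subclosed_compact _ cY) => //; apply: open_closedC.
  by apply: bigcup_open => k _; exact: open_interior.
have /choice [U hU] : forall p, exists U : set Y,
    P p -> open U /\ U `&` P = [set p].
  move=> p; case: (pselect (P p)) => [/iso [U hU]|nPp]; first by exists U.
  by exists setT.
have [D DP cov] : finite_subset_cover P U (~` O).
  apply: (compact_cover_at (y := y0) cO) => [p /hU []//|y Oy].
  have Py : P y.
    apply: contrapT => nPy; apply: Oy; exists y => //.
    by apply: nbhs_singleton; apply: nbhs_interior; apply: nbhsx_ballx.
  by exists y => //; have [_ /seteqP [_ /(_ y erefl) []]] := hU y Py.
exists (finmap.enum_fset D) => p Pp far.
have [|i Di Uip] := cov p.
  by move=> [k nPk /interior_subset kp]; exact: far k nPk kp.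
have Pi : P i by apply/set_mem/DP.
by have [_ /seteqP [/(_ p (conj Uip Pp)) /= -> _]] := hU i Pi.
Qed.

Definition eps (R : realType) (n : nat) : R := n.+1%:R^-1.

Lemma eps_gt0 (R : realType) n : 0 < eps R n.
Proof. by rewrite /eps invr_gt0 ltr0n. Qed.

Lemma eps_le (R : realType) m n : (m <= n)%N -> eps R n <= eps R m.
Proof. by move=> mn; rewrite /eps lef_pV2 ?posrE ?ltr0n // ler_nat ltnS. Qed.

Lemma eps_small (R : realType) (d : R) : 0 < d ->
  exists N, forall n, (N <= n)%N -> eps R n < d.
Proof.
by move=> d0; have [N _ HN] := near_infty_natSinv_lt (PosNum d0); exists N.
Qed.

Section Tracking.
Variables (R : realType) (Y Y' : pseudoMetricType R) (P : set Y) (P' : set Y').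

Definition close_to_rest n (p : Y) := exists k, ~ P k /\ ball k (eps R n) p.

Definition tracks_at (h : Y -> Y') n (p : Y) (q : Y') :=
  exists k, [/\ ~ P k, ball k (eps R n) p & ball (h k) (eps R n) q].

Definition tracks h p q := forall n, close_to_rest n p -> tracks_at h n p q.

Lemma exists_tracking (h : Y -> Y') (k0 : Y) (p : Y) (E : seq Y') :
  accessible_space Y' -> closure P' = [set: Y'] -> open P ->
  (forall k, ~ P k -> ~ P' (h k)) -> ~ P k0 -> P p ->
  exists q, [/\ P' q, q \notin E & tracks h p q].
Proof.
move=> acc dP' oP hP nPk0 Pp.
have [d d0 dP] : nbhs_ball p P by apply/nbhs_ballP/open_nbhs_nbhs.
have [N HN] := eps_small d0.
have close_bounded n : close_to_rest n p -> (n <= N)%N.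
  move=> [k [nPk kp]]; rewrite leqNgt; apply/negP => /ltnW Nn.
  by apply/nPk/dP/ball_sym/(le_ball (ltW (HN n Nn))).
have [[n0 cn0]|nclose] := pselect (exists n, close_to_rest n p); last first.
  have [q [P'q qE _]] := dense_avoid_seq E acc dP' (hP _ nPk0) ltr01.
  by exists q; split => // n cn; case: nclose; exists n.
have some_close : exists n, `[< close_to_rest n p >] by exists n0; apply/asboolP.
have ub_close n : `[< close_to_rest n p >] -> (n <= N)%N.
  by move=> /asboolP; exact: close_bounded.
have [M /asboolP [k [nPk kp]] Mmax] := ex_maxnP some_close ub_close.
have [q [P'q qE hkq]] := dense_avoid_seq E acc dP' (hP _ nPk) (eps_gt0 R M).
exists q; split => // n /asboolP /Mmax nM.
by exists k; split => //; apply: (le_ball (eps_le R nM)).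
Qed.

End Tracking.

Lemma tracks_at_sym (R : realType) (Y Y' : pseudoMetricType R) (P : set Y)
    (P' : set Y') (h : Y -> Y') (g : Y' -> Y) n p q :
  (forall k, ~ P' k -> ~ P (g k)) -> (forall k, ~ P' k -> h (g k) = k) ->
  tracks_at P' g n q p -> tracks_at P h n p q.
Proof. by move=> gP hgK [k [nPk kq gkp]]; exists (g k); rewrite hgK //; split; auto. Qed.

Lemma tracking_cofinite (R : realType) (Y Y' : pseudoMetricType R)
    (P : set Y) (P' : set Y') (h : Y -> Y') (g : Y' -> Y) (s : Y -> Y')
    (t : Y' -> Y) (p0 : Y) :
  compact [set: Y] -> compact [set: Y'] ->
  discrete_set P -> discrete_set P' ->
  (forall k, ~ P' k -> ~ P (g k)) -> (forall k, ~ P' k -> h (g k) = k) ->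
  (forall p, P p -> P' (s p) /\ t (s p) = p) ->
  (forall p, P p -> p <> p0 -> tracks P h p (s p) \/ tracks P' g (s p) p) ->
  forall n, exists E : seq Y, forall p, P p -> p \notin E -> tracks_at P h n p (s p).
Proof.
move=> cY cY' isoP isoP' gP hgK sP s_tracks n.
have [E1 farE1] := discrete_far_finite cY isoP (eps_gt0 R n).
have [E2 farE2] := discrete_far_finite cY' isoP' (eps_gt0 R n).
have close_of_notin (Z : pseudoMetricType R) (Q : set Z) (E : seq Z) (z : Z) :
    Q z -> (forall z, Q z -> (forall k, ~ Q k -> ~ ball k (eps R n) z) -> z \in E) ->
    z \notin E -> close_to_rest Q n z.
  move=> Qz farE zE; apply: contrapT => nclose; move: zE; rewrite farE //.
  by move=> k nQk kz; apply: nclose; exists k.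
exists (p0 :: E1 ++ map t E2) => p Pp.
rewrite in_cons mem_cat !negb_or => /and3P [/eqP pp0 pE1 ptE2].
have [P's tsp] := sP p Pp.
case: (s_tracks p Pp pp0) => [|s_tr]; first by apply; apply: close_of_notin pE1.
apply: tracks_at_sym gP hgK _; apply: s_tr; apply: close_of_notin farE2 _ => //.
by apply: contra ptE2 => spE2; rewrite -tsp map_f.
Qed.

Lemma patch_in (Y Y' : Type) (P : set Y) (h s : Y -> Y') y :
  P y -> patch h P s y = s y.
Proof. by move=> Py; rewrite patchT ?inE. Qed.

Lemma patch_notin (Y Y' : Type) (P : set Y) (h s : Y -> Y') y :
  ~ P y -> patch h P s y = h y.
Proof. by move=> nPy; rewrite patchC ?inE. Qed.

Lemma patch_cancel (Y Y' : Type) (P : set Y) (P' : set Y') (h s : Y -> Y')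
    (g t : Y' -> Y) :
  (forall k, ~ P k -> ~ P' (h k)) -> (forall k, ~ P k -> g (h k) = k) ->
  (forall p, P p -> P' (s p) /\ t (s p) = p) ->
  cancel (patch h P s) (patch g P' t).
Proof.
move=> hP ghK sP y; have [Py|nPy] := pselect (P y).
  by have [P's tsy] := sP y Py; rewrite (patch_in _ _ Py) patch_in.
by rewrite (patch_notin _ _ nPy) patch_notin ?ghK //; exact: hP.
Qed.

Lemma half_ball (R : realType) (Y : pseudoMetricType R) (x : Y) (e : R) :
  0 < e -> ball x (e / 2) `<=` ball x e.
Proof. by move=> e0; apply: le_ball; rewrite ler_pdivrMr // ler_pMr // ler1n. Qed.

Lemma patch_continuous (R : realType) (Y Y' : pseudoMetricType R) (P : set Y)
    (h s : Y -> Y') :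
  accessible_space Y -> open P ->
  discrete_set P ->
  (forall x, ~ P x -> forall e, 0 < e -> exists2 d, 0 < d &
     forall k, ~ P k -> ball x d k -> ball (h x) e (h k)) ->
  (forall n, exists E : seq Y, forall p, P p -> p \notin E -> tracks_at P h n p (s p)) ->
  continuous (patch h P s).
Proof.
move=> acc oP iso h_cont s_cof x; apply/cvg_ballP => e e0.
have [Px|nPx] := pselect (P x).
  have [U [oU UP]] := iso x Px.
  have : nbhs x (U `&` P) by apply: open_nbhs_nbhs; split; [exact: openI|rewrite UP].
  by apply: filterS => y; rewrite UP => /= ->; exact: ballxx.
have e2 : 0 < e / 2 by rewrite divr_gt0.
have [d d0 hd] := h_cont x nPx _ e2.
have d2 : 0 < d / 2 by rewrite divr_gt0.
have [N1 HN1] := eps_small d2; have [N2 HN2] := eps_small e2.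
have [E HE] := s_cof (maxn N1 N2).
have epsd := HN1 _ (leq_maxl N1 N2); have epse := HN2 _ (leq_maxr N1 N2).
apply: filterS (filterI (nbhsx_ballx x _ d2) (near_mem_seq x E acc)) => y [xy yE].
rewrite /= patch_notin //.
have [Py|nPy] := pselect (P y); last first.
  by rewrite patch_notin //; apply/half_ball/hd/half_ball.
have [k [nPk ky hks]] : tracks_at P h (maxn N1 N2) y (s y).
  by apply: HE => //; apply/negP => /yE yx; apply: nPx; rewrite -yx.
rewrite patch_in //; apply: ball_split (le_ball (ltW epse) hks).
by apply/hd/ball_split/ball_sym/(le_ball (ltW epsd) ky).
Qed.

Lemma emb_rest (X Y : topologicalType) (P : set Y) (e : X -> Y) (x : X) :
  homeo_onto e (~` P) -> ~ P (e x).
Proof. by move=> [_ [erange _]]; rewrite -[~ P _]/((~` P) _) -erange; exists x. Qed.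

Lemma rest_emb (X Y : topologicalType) (P : set Y) (e : X -> Y) :
  homeo_onto e (~` P) -> forall k, ~ P k -> exists x, e x = k.
Proof.
by move=> [_ [erange _]] k; rewrite -[~ P k]/((~` P) k) -erange => -[x _]; exists x.
Qed.

Section Transfer.
Variables (R : realType) (X Y Y' : pseudoMetricType R) (x0 : X).
Variables (P : set Y) (P' : set Y') (e : X -> Y) (e' : X -> Y').
Hypothesis he : homeo_onto e (~` P).

(* the homeomorphism [~` P -> ~` P'] obtained by going through [X] *)
Definition transfer (y : Y) : Y' := e' (xget x0 (fun x => e x = y)).

Lemma transfer_emb x : transfer (e x) = e' x.
Proof.
have [e_inj _] := he; congr e'; apply: e_inj.
exact: xgetPex (ex_intro (fun z => e z = e x) x erefl).
Qed.

Hypothesis he' : homeo_onto e' (~` P').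

Lemma transfer_rest k : ~ P k -> ~ P' (transfer k).
Proof.
by move=> /(rest_emb he) [x <-]; rewrite transfer_emb; exact: emb_rest he'.
Qed.

Lemma transfer_continuous x : ~ P x -> forall r, 0 < r -> exists2 d, 0 < d &
  forall k, ~ P k -> ball x d k -> ball (transfer x) r (transfer k).
Proof.
move=> /(rest_emb he) [z <-] r r0; have [e_inj [erange [_ e_open]]] := he.
have [_ [_ [e'_cont _]]] := he'.
have /cvg_ballP /(_ r r0) := e'_cont z; rewrite nbhsE => -[U [oU Uz] Ur].
have [W [oW eU]] := e_open U oU.
have : nbhs (e z) W.
  apply: open_nbhs_nbhs; split => //.
  by have [] : (W `&` ~` P) (e z) by rewrite -eU; exists z.
move=> /nbhs_ballP [d d0 dW]; exists d => // k nPk ezk.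
have : (W `&` ~` P) k by split => //; apply: dW.
by rewrite -eU => -[u Uu <-]; rewrite !transfer_emb; exact: Ur.
Qed.

End Transfer.

Lemma transferK (R : realType) (X Y Y' : pseudoMetricType R) (x0 : X)
    (P : set Y) (P' : set Y') (e : X -> Y) (e' : X -> Y') :
  homeo_onto e (~` P) -> homeo_onto e' (~` P') ->
  forall k, ~ P k -> transfer x0 e' e (transfer x0 e e' k) = k.
Proof.
by move=> he he' k /(rest_emb he) [x <-]; rewrite (transfer_emb _ _ he) (transfer_emb _ _ he').
Qed.

Lemma peripheral_homeomorphism (R : realType) (X Y Y' : pseudoMetricType R)
    (P : set Y) (P' : set Y') (e : X -> Y) (e' : X -> Y') (p : Y) (q : Y') :
  [set: X] !=set0 -> peripheral_extension P e -> peripheral_extension P' e' ->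
  P p -> P' q ->
  exists F : Y -> Y', [/\ homeomorphism F, F @` (~` P) = ~` P' & F p = q].
Proof.
move=> [x0 _] [[hY cY] [cP _] isoP [oP dP] he] [[hY' cY'] [cP' _] isoP' [oP' dP'] he'].
move=> Pp P'q.
pose h := transfer x0 e e'; pose g := transfer x0 e' e.
have hP := transfer_rest (x0 := x0) he he'; have gP := transfer_rest (x0 := x0) he' he.
have ghK : forall k, ~ P k -> g (h k) = k := transferK x0 he he'.
have hgK : forall k, ~ P' k -> h (g k) = k := transferK x0 he' he.
have [s [t [sP tP sp s_tracks]]] :=
  back_and_forth (Fw := tracks P h) (Bw := tracks P' g) Pp P'q
    (fun y Py E => exists_tracking E (hausdorff_accessible hY') dP' oP hP
                     (emb_rest (x := x0) he) Py)
    (fun z P'z E => exists_tracking E (hausdorff_accessible hY) dP oP' gP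
                     (emb_rest (x := x0) he') P'z) cP cP'.
have t_tracks z : P' z -> z <> q -> tracks P' g z (t z) \/ tracks P h (t z) z.
  move=> P'z zq; have [Ptz stz] := tP z P'z.
  have tzp : t z <> p by move=> tzp; apply: zq; rewrite -stz tzp.
  by rewrite -[X in tracks P h _ X]stz -[X in tracks P' g X]stz or_comm; apply: s_tracks.
have s_cof := tracking_cofinite cY cY' isoP isoP' gP hgK sP s_tracks.
have t_cof := tracking_cofinite cY' cY isoP' isoP hP ghK tP t_tracks.
exists (patch h P s); split; last by rewrite patch_in.
- exists (patch g P' t); split; [exact: patch_cancel|split; [exact: patch_cancel|split]].
    apply: patch_continuous (hausdorff_accessible hY) oP isoP
      (transfer_continuous x0 he he') s_cof.
  apply: patch_continuous (hausdorff_accessible hY') oP' isoP'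
    (transfer_continuous x0 he' he) t_cof.
- apply/seteqP; split => [_ [y nPy <-]|k nP'k]; first by rewrite /= patch_notin //; exact: hP.
  by have nPgk := gP k nP'k; exists (g k); rewrite // patch_notin // hgK.
Qed.

Section Walks.
Variables (V : Type) (adj : V -> V -> Prop).
Implicit Types (x y z a b : V) (s L M A B : seq V).

Lemma is_walkP x s : is_walk adj x s <-> path (fun u v => `[< adj u v >]) x s.
Proof.
elim: s x => [|y s IH] x //=; split.
  by case=> axy /IH ys; apply/andP; split; first exact/asboolP.
by case/andP => /asboolP axy /IH.
Qed.

Lemma is_walk_rcons x s a :
  is_walk adj x (rcons s a) <-> is_walk adj x s /\ adj (last x s) a.
Proof.
rewrite !is_walkP rcons_path; split; first by case/andP => ? /asboolP.
by case=> ? ?; apply/andP; split => //; exact/asboolP.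
Qed.

Lemma is_walk_rev x s : (forall u v, adj u v -> adj v u) ->
  is_walk adj x s -> is_walk adj (last x s) (rev (belast x s)).
Proof.
move=> sym /is_walkP ws; apply/is_walkP; rewrite rev_path.
by apply: sub_path ws => u v /asboolP /sym /asboolP.
Qed.

Definition no_backtrack (L : seq V) :=
  forall d i, (i.+2 < size L)%N -> nth d L i <> nth d L i.+2.

Lemma reduced_walkE x s : reduced_walk x s <-> no_backtrack (x :: s).
Proof.
split => [h d i lt_i|h i lt_i].
  have lt_i' : (i + 2 <= size s)%N by move: lt_i => /=; lia.
  move: (h i lt_i'); rewrite addn2 [nth x _ i](set_nth_default d)
    ?[nth x _ i.+2](set_nth_default d) //.
  exact: ltn_trans lt_i.
by rewrite addn2; apply: h; rewrite /=; lia.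
Qed.

Lemma no_backtrack_rev L : no_backtrack L -> no_backtrack (rev L).
Proof.
move=> h d i; rewrite size_rev => lt_i.
rewrite !nth_rev //; last exact: ltn_trans lt_i.
have -> : (size L - i.+1 = (size L - i.+3).+2)%N by rewrite -!subSn; lia.
by move=> e; apply: (h d (size L - i.+3)%N); [lia|rewrite e].
Qed.

Lemma no_backtrack_catl L M : no_backtrack (L ++ M) -> no_backtrack L.
Proof.
move=> h d i lt_i; have := h d i; rewrite size_cat !nth_cat lt_i ifT; last by lia.
by apply; lia.
Qed.

Lemma no_backtrack_cat A a B : no_backtrack (rcons A a) -> no_backtrack (a :: B) ->
  (forall d, 0 < size A -> 0 < size B -> nth d A (size A).-1 <> nth d B 0)%N ->
  no_backtrack (A ++ a :: B).
Proof.
move=> hA hB junction d i; rewrite size_cat /= => lt_i.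
have nthA j : (j <= size A)%N -> nth d (A ++ a :: B) j = nth d (rcons A a) j.
  by move=> le_j; rewrite nth_cat nth_rcons; case: ltngtP le_j => // ->; rewrite subnn.
have nthB j : (size A <= j)%N -> nth d (A ++ a :: B) j = nth d (a :: B) (j - size A).
  by move=> le_j; rewrite nth_cat ltnNge le_j.
have [le_i|lt_Ai] := leqP i.+2 (size A).
  by rewrite !nthA //; [apply: hA; rewrite size_rcons ltnS|lia].
have [le_Ai|lt_iA] := leqP (size A) i.
  rewrite !nthB; try lia.
  have -> : (i.+2 - size A = (i - size A).+2)%N by lia.
  by apply: hB => /=; lia.
have -> : i = (size A).-1 by lia.
rewrite nthA ?nthB; try lia.
rewrite nth_rcons ifT; last by lia.
have -> : ((size A).-1.+2 - size A = 1)%N by lia.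
by apply: junction; lia.
Qed.

Lemma reduced_walk_nil x : reduced_walk x [::].
Proof. by move=> i; rewrite addn2. Qed.

Lemma reduced_walk_single x a : reduced_walk x [:: a].
Proof. by move=> i; rewrite addn2. Qed.

Lemma reduced_walk_cons2 x y z s :
  reduced_walk x [:: y, z & s] <-> x <> z /\ reduced_walk y (z :: s).
Proof.
rewrite !reduced_walkE; split.
  move=> h; split; first by have := h x 0%N; apply.
  by move=> d i lt_i; have := h d i.+1; apply; rewrite /= ltnS.
case=> xz h d [|i] lt_i /=; first exact: xz.
by apply: h; move: lt_i; rewrite /= ltnS.
Qed.

Lemma reduced_walk_rcons2 x s b a : reduced_walk x (rcons (rcons s b) a) <->
  reduced_walk x (rcons s b) /\ last x s <> a.
Proof.
rewrite !reduced_walkE -!rcons_cons -cats1; split.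
  move=> h; split; first exact: no_backtrack_catl h.
  have := h x (size s); rewrite cats1 !size_rcons /= -rcons_cons.
  rewrite !nth_rcons /= !size_rcons ltnS leqnSn ltnn eqxx.
  by rewrite ltnS leqnn -rcons_cons nth_rcons /= ltnSn -last_nth; apply.
case=> hsb sa; rewrite -cats1 -catA cat1s; apply: no_backtrack_cat => //.
by move=> d _ _ /=; rewrite -last_nth.
Qed.

Lemma reduced_walk_rcons x s a : reduced_walk x (rcons s a) -> reduced_walk x s.
Proof.
by rewrite !reduced_walkE -rcons_cons -cats1; exact: no_backtrack_catl.
Qed.

Lemma exists_reduced_walk x s : is_walk adj x s ->
  exists s', [/\ is_walk adj x s', reduced_walk x s' & last x s' = last x s].
Proof.
elim/last_ind: s => [|s a IH]; first by exists [::]; split => //; exact: reduced_walk_nil.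
move=> /is_walk_rcons [/IH [s' [ws' rs' ls']] sa]; rewrite last_rcons.
case/lastP: s' ws' rs' ls' => [|s' b] ws' rs' ls'.
  exists [:: a]; split => //; last exact: reduced_walk_single.
  by split => //; move: sa; rewrite -ls'.
rewrite last_rcons in ls'.
have [s'a|s'a] := pselect (last x s' = a).
  exists s'; split => //; last exact: reduced_walk_rcons rs'.
  by case/is_walk_rcons: ws'.
exists (rcons (rcons s' b) a); split; last by rewrite last_rcons.
  by apply/is_walk_rcons; rewrite last_rcons ls'; split => //; rewrite -ls'.
exact/reduced_walk_rcons2.
Qed.

Hypothesis tree : is_tree adj.

Lemma reduced_walk_unique x s1 s2 :
  is_walk adj x s1 -> reduced_walk x s1 -> is_walk adj x s2 -> reduced_walk x s2 ->
  last x s1 = last x s2 -> s1 = s2.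
Proof.
have [sym _ _ acyclic] := tree.
have no_cycle s : is_walk adj x s -> reduced_walk x s -> (0 < size s)%N ->
    last x s <> x by move=> ws rs s0 sx; exact: acyclic x s ws s0 sx rs.
elim/last_ind: s1 s2 => [|s1 a IH] s2; case/lastP: s2 => [|s2 b] //.
- move=> _ _ ws2 rs2; rewrite last_rcons => xb.
  by have := no_cycle _ ws2 rs2; rewrite size_rcons last_rcons => /(_ isT) /(_ (esym xb)).
- move=> ws1 rs1 _ _; rewrite last_rcons => ax.
  by have := no_cycle _ ws1 rs1; rewrite size_rcons last_rcons => /(_ isT) /(_ ax).
move=> ws1 rs1 ws2 rs2; rewrite !last_rcons => ab; subst b.
have [/= e|ne] := pselect (last x s1 = last x s2).
  have [ws1' _] := iffLR (is_walk_rcons _ _ _) ws1.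
  have [ws2' _] := iffLR (is_walk_rcons _ _ _) ws2.
  have rs1' := reduced_walk_rcons rs1; have rs2' := reduced_walk_rcons rs2.
  by rewrite (IH s2).
(* two distinct reduced walks to the same vertex glue into a reduced cycle *)
exfalso; pose c := s1 ++ a :: rev (x :: s2).
apply: (no_cycle c); last by rewrite last_cat /= rev_cons last_rcons.
- apply/is_walkP; rewrite cat_path; move: ws1 => /is_walkP; rewrite rcons_path.
  case/andP => -> /= ->; have := is_walk_rev sym ws2.
  by rewrite last_rcons belast_rcons => /is_walkP.
- apply/reduced_walkE; rewrite -cat_cons; apply: no_backtrack_cat.
  + by move: rs1; rewrite reduced_walkE.
  + by rewrite -rev_rcons; apply/no_backtrack_rev; rewrite -reduced_walkE.
  + move=> d _ _; rewrite /= -last_nth nth_rev //= subSS subn0 -last_nth.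
    exact: ne.
- by rewrite size_cat addnS.
Qed.

End Walks.

Arguments ts_bmap_in {R X V adj} _ {t s}.
Arguments ts_bmap_inj {R X V adj} _ {t s s'}.
Arguments ts_bmap_surj {R X V adj} _ {t p}.
Arguments ts_periph {R X V adj} _ t.

Section TreeIsomorphism.
Variables (R : realType) (X : pseudoMetricType R) (V : Type) (adj : V -> V -> Prop).
Hypothesis tree : is_tree adj.
Variables (Th Th' : tree_system X adj) (r : V).

Definition rest_homeo t t' (F : Xdd Th t -> Xdd Th' t') :=
  homeomorphism F /\ F @` (~` Per Th t) = ~` Per Th' t'.

Hypothesis rest_homeo_exists : forall t t' p q, Per Th t p -> Per Th' t' q ->
  exists F : Xdd Th t -> Xdd Th' t', rest_homeo F /\ F p = q.

Let adj_sym : forall x y, adj x y -> adj y x. Proof. by case: tree. Qed.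

Lemma rest_homeo_per t t' (F : Xdd Th t -> Xdd Th' t') : rest_homeo F ->
  [/\ injective F, forall p, Per Th t p -> Per Th' t' (F p) &
     forall q, Per Th' t' q -> exists2 p, Per Th t p & F p = q].
Proof.
move=> [[G [FK [GK _]]] Frest]; have F_inj := can_inj FK.
split=> [//|p Pp|q Pq].
  apply: contrapT => nPFp; have : (~` Per Th' t') (F p) by [].
  by rewrite -Frest => -[y nPy /F_inj yp]; apply: nPy; rewrite yp.
exists (G q); last by rewrite GK.
apply: contrapT => nPGq; have : (F @` (~` Per Th t)) q by exists (G q); rewrite ?GK.
by rewrite Frest.
Qed.

Lemma tree_system_per (T : tree_system X adj) t : exists p, Per T t p.
Proof. by have [_ [_ /infinite_setN0 //] _ _ _] := ts_periph T t. Qed.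

Lemma rest_homeo_total t t' p q : exists F : Xdd Th t -> Xdd Th' t',
  Per Th t p -> Per Th' t' q -> rest_homeo F /\ F p = q.
Proof.
have [[Pp Pq]|nPpq] := pselect (Per Th t p /\ Per Th' t' q).
  by have [F ?] := rest_homeo_exists Pp Pq; exists F.
by exists (fun=> q) => Pp Pq; case: nPpq.
Qed.

(* junk unless [p] and [q] are peripheral *)
Definition vertex_homeo t t' p q := projT1 (cid (@rest_homeo_total t t' p q)).

Definition base (T : tree_system X adj) t := projT1 (cid (tree_system_per T t)).

(* The map at a vertex [t] with image [t'] depends only on the edge from [t]
   towards the root [r] and its image ([None] at the root). *)
Definition homeo_at t t' (o : option (V * V)) : Xdd Th t -> Xdd Th' t' :=
  if o is Some (u, u') then vertex_homeo (bmap Th t u) (bmap Th' t' u')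
  else vertex_homeo (base Th t) (base Th' t').
Arguments homeo_at : clear implicits.

Lemma homeo_atP t t' u u' : adj t u -> adj t' u' ->
  rest_homeo (homeo_at t t' (Some (u, u'))) /\
  homeo_at t t' (Some (u, u')) (bmap Th t u) = bmap Th' t' u'.
Proof.
move=> tu t'u'; apply: (projT2 (cid (rest_homeo_total _ _))); exact: ts_bmap_in.
Qed.

Lemma base_per (T : tree_system X adj) t : Per T t (base T t).
Proof. exact: projT2 (cid (tree_system_per T t)). Qed.

Lemma homeo_at_root t t' : rest_homeo (homeo_at t t' None).
Proof.
by have [] := projT2 (cid (rest_homeo_total (base Th t) (base Th' t'))) (base_per _ _)
  (base_per _ _).
Qed.

(* junk [r] when [F (bmap Th t s)] labels no edge at [t'] *)
Definition child_image t t' (F : Xdd Th t -> Xdd Th' t') s : V :=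
  if pselect (exists s', adj t' s' /\ bmap Th' t' s' = F (bmap Th t s))
  is left e then projT1 (cid e) else r.

Lemma child_imageP t t' F s :
  (exists s', adj t' s' /\ bmap Th' t' s' = F (bmap Th t s)) ->
  adj t' (child_image F s) /\ bmap Th' t' (child_image F s) = F (bmap Th t s).
Proof. by rewrite /child_image; case: pselect => // e _; exact: projT2 (cid e). Qed.

(* the state is (edge towards the root and its image, vertex, image of the vertex) *)
Definition descend (st : option (V * V) * V * V) s :=
  let: (o, t, t') := st in (Some (t, t'), s, child_image (homeo_at t t' o) s).

Definition trace w := foldl descend (None, r, r) w.

Lemma exists_geodesic t :
  exists w, [/\ is_walk adj r w, reduced_walk r w & last r w = t].
Proof.
have [_ _ conn _] := tree; have [s [ws <-]] := conn r t.
by have [w [ww rw <-]] := exists_reduced_walk ws; exists w.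
Qed.

Definition geodesic t := projT1 (cid (exists_geodesic t)).
Definition lam t := (trace (geodesic t)).2.
Definition towards_root t := (trace (geodesic t)).1.1.
Definition homeo t : Xdd Th t -> Xdd Th' (lam t) :=
  homeo_at t (lam t) (towards_root t).
Arguments homeo : clear implicits.

Lemma geodesicP t :
  [/\ is_walk adj r (geodesic t), reduced_walk r (geodesic t) & last r (geodesic t) = t].
Proof. exact: projT2 (cid (exists_geodesic t)). Qed.

Lemma geodesic_eq w : is_walk adj r w -> reduced_walk r w -> geodesic (last r w) = w.
Proof.
move=> ww rw; have [gw gr gl] := geodesicP (last r w).
exact: (reduced_walk_unique tree gw gr ww rw gl).
Qed.

Lemma trace_last w : (trace w).1.2 = last r w.
Proof.
elim/last_ind: w => [|w a IH] //.
by rewrite /trace foldl_rcons last_rcons; case: (foldl _ _ _) => [ [] ].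
Qed.

Lemma geodesic_root : geodesic r = [::].
Proof. by apply: (geodesic_eq (w := [::])) => //; exact: reduced_walk_nil. Qed.

Lemma lam_root : lam r = r.
Proof. by rewrite /lam geodesic_root. Qed.

Lemma towards_root_root : towards_root r = None.
Proof. by rewrite /towards_root geodesic_root. Qed.

Lemma lam_child w s : is_walk adj r (rcons w s) -> reduced_walk r (rcons w s) ->
  lam s = child_image (homeo (last r w)) s /\
  towards_root s = Some (last r w, lam (last r w)).
Proof.
move=> ws rs.
have gs : geodesic s = rcons w s by rewrite -{1}(last_rcons r w s) geodesic_eq.
have gt : geodesic (last r w) = w.
  by apply: geodesic_eq; [case/is_walk_rcons: ws|exact: reduced_walk_rcons rs].
rewrite /lam /towards_root /homeo /lam /towards_root gs gt /trace foldl_rcons.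
by have := trace_last w; rewrite /trace; case: (foldl _ _ _) => [ [ob t] u ] /= ->.
Qed.

Lemma image_neighbour t t' (F : Xdd Th t -> Xdd Th' t') s : rest_homeo F -> adj t s ->
  adj t' (child_image F s) /\ bmap Th' t' (child_image F s) = F (bmap Th t s).
Proof.
move=> /rest_homeo_per [_ F_per _] ts; apply: child_imageP.
have [s' t's' <-] := ts_bmap_surj Th' (F_per _ (ts_bmap_in Th ts)).
by exists s'.
Qed.

Lemma homeo_walk w : is_walk adj r w -> reduced_walk r w -> rest_homeo (homeo (last r w)).
Proof.
elim/last_ind: w => [|w s IH] ws rs.
  by rewrite /homeo towards_root_root; exact: homeo_at_root.
have [lam_s towards_s] := lam_child ws rs.
have [wt ts] := iffLR (is_walk_rcons _ _ _ _) ws.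
have [ts' _] := image_neighbour (IH wt (reduced_walk_rcons rs)) ts.
rewrite -lam_s in ts'; rewrite last_rcons /homeo towards_s.
by case: (homeo_atP (adj_sym ts) (adj_sym ts')).
Qed.

Lemma homeoP t : rest_homeo (homeo t).
Proof. by have [gw gr gl] := geodesicP t; have := homeo_walk gw gr; rewrite gl. Qed.

Lemma geodesic_adj t s : adj t s ->
  geodesic s = rcons (geodesic t) s \/ geodesic t = rcons (geodesic s) t.
Proof.
move=> ts; have [gw gr gl] := geodesicP t.
move: gw gr gl; case/lastP: (geodesic t) => [|w b] gw gr gl.
  left; rewrite /= in gl; subst t.
  have -> : s = last r [:: s] by [].
  by apply: geodesic_eq; [split|exact: reduced_walk_single].
rewrite last_rcons in gl; subst b.
have [<-|ne] := pselect (last r w = s).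
  right; congr rcons; symmetry; apply: geodesic_eq; first by case/is_walk_rcons: gw.
  exact: reduced_walk_rcons gr.
left; rewrite -{1}(last_rcons r (rcons w t) s); apply: geodesic_eq.
  by apply/is_walk_rcons; rewrite last_rcons.
exact/reduced_walk_rcons2.
Qed.

Lemma lam_compat t s : adj t s ->
  adj (lam t) (lam s) /\ bmap Th' (lam t) (lam s) = homeo t (bmap Th t s).
Proof.
move=> ts; have [gt rt lt] := geodesicP t; have [gs rs ls] := geodesicP s.
case: (geodesic_adj ts) => e.
  rewrite e in gs rs; have [lam_s _] := lam_child gs rs; rewrite lt in lam_s.
  by rewrite lam_s; exact: image_neighbour (homeoP t) ts.
rewrite e in gt rt; have [lam_t towards_t] := lam_child gt rt.
rewrite ls in lam_t towards_t.
have st' : adj (lam s) (lam t).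
  by rewrite lam_t; case: (image_neighbour (homeoP s) (adj_sym ts)).
split; first exact: adj_sym.
by rewrite /homeo towards_t; case: (homeo_atP ts (adj_sym st')).
Qed.

Lemma lam_neighbour_inj t s1 s2 : adj t s1 -> adj t s2 -> lam s1 = lam s2 -> s1 = s2.
Proof.
move=> ts1 ts2 e; have [_ c1] := lam_compat ts1; have [_ c2] := lam_compat ts2.
have [homeo_inj _ _] := rest_homeo_per (homeoP t).
by apply: (ts_bmap_inj Th ts1 ts2); apply: homeo_inj; rewrite -c1 -c2 e.
Qed.

Lemma lam_neighbour_onto t u : adj (lam t) u -> exists2 s, adj t s & lam s = u.
Proof.
move=> tu; have [_ _ homeo_onto_per] := rest_homeo_per (homeoP t).
have [p Pp hp] := homeo_onto_per _ (ts_bmap_in Th' tu).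
have [s ts bs] := ts_bmap_surj Th Pp.
exists s => //; have [ts' c] := lam_compat ts.
by apply: (ts_bmap_inj Th' ts' tu); rewrite c bs hp.
Qed.

Lemma lam_surj u : exists t, lam t = u.
Proof.
have [_ _ conn _] := tree; have [w [ww <-]] := conn r u.
elim/last_ind: w ww => [|w a IH] ww; first by exists r; rewrite lam_root.
case/is_walk_rcons: ww => /IH [t <-] ta; have [s _ <-] := lam_neighbour_onto ta.
by exists s; rewrite last_rcons.
Qed.

Lemma is_walk_map x w : is_walk adj x w -> is_walk adj (lam x) (map lam w).
Proof.
elim: w x => [|y w IH] x //= [xy wy]; split; last exact: IH.
by case: (lam_compat xy).
Qed.

Lemma reduced_walk_map x w : is_walk adj x w -> reduced_walk x w ->
  reduced_walk (lam x) (map lam w).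
Proof.
elim: w x => [|y w IH] x; first by move=> _ _; exact: reduced_walk_nil.
case: w IH => [|z w] IH; first by move=> _ _; exact: reduced_walk_single.
move=> [xy [yz wz]] /reduced_walk_cons2 [xz rz] /=; apply/reduced_walk_cons2; split.
  by move=> e; apply: xz; apply: (lam_neighbour_inj (adj_sym xy) yz e).
by apply: (IH y) => //; split.
Qed.

Lemma map_lam_inj x w1 w2 : is_walk adj x w1 -> is_walk adj x w2 ->
  map lam w1 = map lam w2 -> w1 = w2.
Proof.
elim: w1 x w2 => [|y w1 IH] x [|z w2] //= [xy w1y] [xz w2z] [e1 e2].
have yz := lam_neighbour_inj xy xz e1; subst z; congr cons; exact: (IH y).
Qed.

Lemma lam_inj : injective lam.
Proof.
move=> t1 t2 e; have [w1 r1 l1] := geodesicP t1; have [w2 r2 l2] := geodesicP t2.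
have last_map w : last r (map lam w) = lam (last r w) by rewrite -{1}lam_root last_map.
have := reduced_walk_unique tree (is_walk_map w1) (reduced_walk_map w1 r1)
  (is_walk_map w2) (reduced_walk_map w2 r2).
rewrite lam_root !last_map l1 l2 e => /(_ erefl) /(map_lam_inj w1 w2) w12.
by rewrite -l1 -l2 w12.
Qed.

Lemma tree_systems_isomorphic : ts_isomorphic Th Th'.
Proof.
exists lam; split.
  have /choice [lam_inv lamK] := lam_surj; exists lam_inv => // t.
  by apply: lam_inj; rewrite lamK.
split=> [x y|]; first split => [xy|/lam_neighbour_onto [s xs /lam_inj <-] //].
  by case: (lam_compat xy).
exists homeo => t; have [h1 h2] := homeoP t; split => // s ts.
by case: (lam_compat ts).
Qed.

End TreeIsomorphism.

Theorem lemma1p2 (R : realType) (X : pseudoMetricType R)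
    (hX : hausdorff_space X) (cX : compact [set: X]) (neX : [set: X] !=set0)
    (V : Type) (adj : V -> V -> Prop)
    (hT : countable_tree_infinite_valence adj)
    (Th Th' : tree_system X adj) :
  ts_isomorphic Th Th'.
Proof.
have [tree [r] _ _] := hT.
apply: (tree_systems_isomorphic tree r) => t t' p q Pp Pq.
have [F [F_homeo F_rest Fp]] :=
  peripheral_homeomorphism neX (ts_periph Th t) (ts_periph Th' t') Pp Pq.
by exists F.
Qed.
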